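(* Let $(S,T,\alpha,\beta)$ be a matched product system of left inverse semi-braces. Then for all $a\in S$ and $u\in T$: $$\lambda_a\,\alpha_{\beta_a^{-1}(u)}=\alpha_u\,\lambda_{\alpha_u^{-1}(a)},\qquad \lambda_u\,\beta_{\alpha_u^{-1}(a)}=\beta_a\,\lambda_{\beta_a^{-1}(u)}$$ as maps $S\to S$ and $T\to T$ respectively.
   Context: An inverse semigroup is a semigroup $(S,\cdot)$ in which for each $a$ there is a unique $a^{-1}$ with $aa^{-1}a=a$, $a^{-1}aa^{-1}=a^{-1}$. A left inverse semi-brace is a triple $(S,+,\cdot)$ with $(S,+)$ a semigroup, $(S,\cdot)$ an inverse semigroup and $a(b+c)=ab+a(a^{-1}+c)$ for all $a,b,c$; in it set $\lambda_a(b)=a(a^{-1}+b)$ (similarly in $T$). A matched product system of left inverse semi-braces is a quadruple $(S,T,\alpha,\beta)$ where $S,T$ are left inverse semi-braces, $\alpha:T\to\mathrm{Aut}(S,+)$ is a homomorphism of inverse semigroups from $(T,\cdot)$ into the automorphism group of $(S,+)$, $\beta:S\to\mathrm{Aut}(T,+)$ is a homomorphism of inverse semigroups from $(S,\cdot)$ into the automorphism group of $(T,+)$ (write $\alpha_u=\alpha(u)$, $\beta_a=\beta(a)$, and $\alpha_u^{-1},\beta_a^{-1}$ for the inverse maps), such that for all $a,b\in S$, $u,v\in T$: $\alpha_u(\alpha_u^{-1}(a)\,b)=a\,\alpha_{\beta_a^{-1}(u)}(b)$ and $\beta_a(\beta_a^{-1}(u)\,v)=u\,\beta_{\alpha_u^{-1}(a)}(v)$;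 and if $\alpha_u(\alpha_u^{-1}(a)\,a)=a$ and $\beta_a(\beta_a^{-1}(u)\,u)=u$, then $\alpha_u(a)=a$ and $\beta_a(u)=u$. *)

Record InvSemiBrace := {
  car :> Type;
  add : car -> car -> car;
  mul : car -> car -> car;
  inv : car -> car;
  add_assoc : forall a b c, add a (add b c) = add (add a b) c;
  mul_assoc : forall a b c, mul a (mul b c) = mul (mul a b) c;
  inv_r : forall a, mul (mul a (inv a)) a = a;
  inv_l : forall a, mul (mul (inv a) a) (inv a) = inv a;
  inv_uniq : forall a b, mul (mul a b) a = a -> mul (mul b a) b = b -> b = inv a;
  brace : forall a b c, mul a (add b c) = add (mul a b) (mul a (add (inv a) c))
}.

Definition lam (B : InvSemiBrace) (a b : B) : B := mul B a (add B (inv B a) b).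

Record AutAdd (B : InvSemiBrace) := {
  afun : B -> B;
  ainv : B -> B;
  afunK : forall x, ainv (afun x) = x;
  ainvK : forall x, afun (ainv x) = x;
  afun_add : forall x y, afun (add B x y) = add B (afun x) (afun y)
}.
Arguments afun {B} _ _.
Arguments ainv {B} _ _.

(* Matched product system (S,T,alpha,beta).  alpha_u = afun (alpha u),
   alpha_u^{-1} = ainv (alpha u). *)
Definition matched_product_system (S T : InvSemiBrace)
  (alpha : T -> AutAdd S) (beta : S -> AutAdd T) : Prop :=
  (forall (u v : T) (x : S),
      afun (alpha (mul T u v)) x = afun (alpha u) (afun (alpha v) x)) /\
  (forall (a b : S) (y : T),
      afun (beta (mul S a b)) y = afun (beta a) (afun (beta b) y)) /\
  (forall (a b : S) (u : T),
      afun (alpha u) (mul S (ainv (alpha u) a) b)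
      = mul S a (afun (alpha (ainv (beta a) u)) b)) /\
  (forall (a : S) (u v : T),
      afun (beta a) (mul T (ainv (beta a) u) v)
      = mul T u (afun (beta (ainv (alpha u) a)) v)) /\
  (forall (a : S) (u : T),
      afun (alpha u) (mul S (ainv (alpha u) a) a) = a ->
      afun (beta a) (mul T (ainv (beta a) u) u) = u ->
      afun (alpha u) a = a /\ afun (beta a) u = u).


(* Applying the compatibility axiom to b = a'^{-1} + x, where a' = alpha_u^{-1}(a)
   and u' = beta_a^{-1}(u), and using that alpha_{u'} is additive, reduces the first
   identity to alpha_{u'}(a'^{-1}) = a^{-1}.  This follows from uniqueness of inverses
   in (S,.): since alpha and beta are homomorphisms into groups, idempotents act
   trivially, so each alpha_u maps idempotents to idempotents, and the two products
   a w and w a (w = alpha_{u'}(a'^{-1})) are images of the idempotents a'a'^{-1} and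
   a'^{-1}a'.  The second identity is the first with the roles of S and T exchanged. *)

Lemma afun_inj (B : InvSemiBrace) (f : AutAdd B) (x y : B) :
  afun f x = afun f y -> x = y.
Proof. intros h. rewrite <- (afunK _ f x), <- (afunK _ f y), h. reflexivity. Qed.

Lemma ainv_fix (B : InvSemiBrace) (f : AutAdd B) (x : B) :
  afun f x = x -> ainv f x = x.
Proof. intros h. apply (afun_inj _ f). rewrite ainvK. symmetry. exact h. Qed.

Definition idempotent (B : InvSemiBrace) (e : B) : Prop := mul B e e = e.

Lemma mul_inv_idem (B : InvSemiBrace) (a : B) : idempotent B (mul B a (inv B a)).
Proof. unfold idempotent. rewrite mul_assoc, inv_r. reflexivity. Qed.

Lemma inv_mul_idem (B : InvSemiBrace) (a : B) : idempotent B (mul B (inv B a) a).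
Proof. unfold idempotent. rewrite mul_assoc, inv_l. reflexivity. Qed.

Definition act_hom (A B : InvSemiBrace) (phi : A -> AutAdd B) : Prop :=
  forall (u v : A) (x : B), afun (phi (mul A u v)) x = afun (phi u) (afun (phi v) x).

Section ActionHomomorphism.
Variables (A B : InvSemiBrace) (phi : A -> AutAdd B).
Hypothesis phi_hom : act_hom A B phi.

Lemma act_idem_fix (e : A) (x : B) : idempotent A e -> afun (phi e) x = x.
Proof.
  intros he. apply (afun_inj _ (phi e)). rewrite <- phi_hom, he. reflexivity.
Qed.

Lemma act_ainv_fix (e : A) (x : B) : idempotent A e -> ainv (phi e) x = x.
Proof. intros he. apply ainv_fix, act_idem_fix, he. Qed.

Lemma afun_act_inv (u : A) (x : B) : afun (phi u) x = ainv (phi (inv A u)) x.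
Proof.
  apply (afun_inj _ (phi (inv A u))). rewrite ainvK, <- phi_hom.
  apply act_idem_fix, inv_mul_idem.
Qed.

End ActionHomomorphism.

Definition matched_compat (S T : InvSemiBrace)
    (alpha : T -> AutAdd S) (beta : S -> AutAdd T) : Prop :=
  forall (a b : S) (u : T),
    afun (alpha u) (mul S (ainv (alpha u) a) b)
    = mul S a (afun (alpha (ainv (beta a) u)) b).

Section MatchedPair.
Variables (S T : InvSemiBrace) (alpha : T -> AutAdd S) (beta : S -> AutAdd T).
Hypothesis alpha_hom : act_hom T S alpha.
Hypothesis beta_hom : act_hom S T beta.
Hypothesis compat : matched_compat S T alpha beta.

Lemma mul_afunl (v : T) (x c : S) :
  mul S (afun (alpha v) x) c
  = afun (alpha v) (mul S x (ainv (alpha (ainv (beta (afun (alpha v) x)) v)) c)).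
Proof.
  pose proof (compat (afun (alpha v) x)
                (ainv (alpha (ainv (beta (afun (alpha v) x)) v)) c) v) as h.
  rewrite afunK, ainvK in h. symmetry. exact h.
Qed.

Lemma ainv_idem (u : T) (e : S) :
  idempotent S e -> idempotent S (ainv (alpha u) e).
Proof.
  intros he. unfold idempotent. apply (afun_inj _ (alpha u)).
  rewrite compat, (act_ainv_fix _ _ _ beta_hom _ _ he), !ainvK. exact he.
Qed.

Lemma afun_idem (u : T) (e : S) :
  idempotent S e -> idempotent S (afun (alpha u) e).
Proof.
  intros he. rewrite (afun_act_inv _ _ _ alpha_hom). apply ainv_idem, he.
Qed.

Lemma mul_afunl_idem (v : T) (e c : S) :
  idempotent S e ->
  mul S (afun (alpha v) e) c = afun (alpha v) (mul S e (ainv (alpha v) c)).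
Proof.
  intros he. rewrite mul_afunl, (act_ainv_fix _ _ _ beta_hom); [reflexivity|].
  apply afun_idem, he.
Qed.

Lemma afun_inv_ainv (a : S) (u : T) :
  afun (alpha (ainv (beta a) u)) (inv S (ainv (alpha u) a)) = inv S a.
Proof.
  set (a' := ainv (alpha u) a). set (u' := ainv (beta a) u).
  set (w := afun (alpha u') (inv S a')).
  assert (aw : mul S a w = afun (alpha u) (mul S a' (inv S a'))).
  { symmetry. apply compat. }
  assert (aw_idem : idempotent S (mul S a w)).
  { rewrite aw. apply afun_idem, mul_inv_idem. }
  assert (beta_w : ainv (beta w) u' = u).
  { apply (afun_inj _ (beta w)). rewrite ainvK.
    apply (afun_inj _ (beta a)). unfold u'. rewrite ainvK, <- beta_hom.
    symmetry. apply (act_idem_fix _ _ _ beta_hom), aw_idem. }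
  assert (wa : mul S w a = afun (alpha u') (mul S (inv S a') a')).
  { unfold w. rewrite mul_afunl. fold w. rewrite beta_w. reflexivity. }
  apply inv_uniq.
  - rewrite aw, mul_afunl_idem by apply mul_inv_idem.
    fold a'. rewrite inv_r. apply ainvK.
  - rewrite wa, mul_afunl_idem by apply inv_mul_idem.
    unfold w. rewrite afunK, inv_l. reflexivity.
Qed.

Lemma lam_afun_exchange (a : S) (u : T) (x : S) :
  lam S a (afun (alpha (ainv (beta a) u)) x)
  = afun (alpha u) (lam S (ainv (alpha u) a) x).
Proof. unfold lam. rewrite compat, afun_add, afun_inv_ainv. reflexivity. Qed.

End MatchedPair.

Theorem lemma26 (S T : InvSemiBrace) (alpha : T -> AutAdd S) (beta : S -> AutAdd T)
  (H : matched_product_system S T alpha beta) :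
  forall (a : S) (u : T),
    (forall x : S,
        lam S a (afun (alpha (ainv (beta a) u)) x)
        = afun (alpha u) (lam S (ainv (alpha u) a) x)) /\
    (forall y : T,
        lam T u (afun (beta (ainv (alpha u) a)) y)
        = afun (beta a) (lam T (ainv (beta a) u) y)).
Proof.
  destruct H as [alpha_hom [beta_hom [compat_ST [compat_TS _]]]].
  intros a u. split.
  - intros x. apply lam_afun_exchange; assumption.
  - intros y. apply (lam_afun_exchange T S beta alpha beta_hom alpha_hom).
    intros v w b. apply compat_TS.
Qed.
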